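(* Let $\alpha>0$ and use Singleton-Only-SAFFRON with $M=e(1+\alpha)K\ln K$ right nodes (so $m=2e(1+\alpha)K\ln K\log_2 n\approx5.437(1+\alpha)K\ln K\log_2 n$ tests), where each item is connected to each right node independently with probability $1/K$. Then the decoder finds all $K$ defective items with probability $1-O(K^{-\alpha})$ (indeed the probability that some defective item is connected to no singleton right node is at most $K^{-\alpha}$), and the computational complexity of decoding is $O(K\log K\log n)$.
   Context: Items are indexed by $[n]$ with $n=2^L$; exactly $K$ items are defective, indicated by $x\in\{0,1\}^n$. $b_\ell\in\{0,1\}^L$ is the $L$-bit binary representation of $\ell-1$ and $\overline{v}$ is the bitwise complement. Singleton-Only-SAFFRON: item $\ell$ has signature $u_\ell=(b_\ell;\overline{b_\ell})\in\{0,1\}^{2L}$. A random bipartite graph has $n$ left nodes (items) and $M$ right nodes with incidence matrix $T$. For each right node $k$ there are $2L$ tests, the $r$-th pooling the items $\ell$ with $T_{k\ell}=1$ and $(u_\ell)_r=1$ (positive iff the pool contains a defective item); thus the measurement vector is $z_k=\bigvee_{\ell:T_{k\ell}x_\ell=1}u_\ell\in\{0,1\}^{2L}$. A right node is a singleton if it is connected to exactly one defective item. Decoder: for every right node $k$ whose measurement vector has Hamming weight exactly $L$, declare defective the item $\ell$ whose $b_\ell$ equals the first $L$ bits of $z_k$. Here $\ln$ is the natural logarithm and $e$ its base. *)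

(* Probabilities are
   computed as explicit finite sums over all bipartite graphs T. *)
From Stdlib Require Import Reals.
From HB Require Import structures.
From mathcomp Require Import all_boot.
Set Implicit Arguments.
Unset Strict Implicit.
Unset Printing Implicit Defensive.

HB.instance Definition _ :=
  Monoid.isComLaw.Build R R0 Rplus (fun a b c => esym (Rplus_assoc a b c)) Rplus_comm Rplus_0_l.
HB.instance Definition _ :=
  Monoid.isComLaw.Build R R1 Rmult (fun a b c => esym (Rmult_assoc a b c)) Rmult_comm Rmult_1_l.

(* Items are 'I_(2^L); item i (0-based) corresponds to item l = i+1 in the
   paper, so b_l is the L-bit binary representation of i.
   bit i r = r-th binary digit of i (little-endian; the bit order is
   immaterial as long as it is used consistently). *)
Definition bit (i : nat) (r : nat) : bool := odd (i %/ 2 ^ r).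

Definition bvec L (i : 'I_(2 ^ L)) (r : 'I_L) : bool := bit i r.

Definition signature L (i : 'I_(2 ^ L)) (r : 'I_(L + L)) : bool :=
  match split r with
  | inl j => bit i j
  | inr j => ~~ bit i j
  end.

Notation graph M L := {ffun 'I_M * 'I_(2 ^ L) -> bool}.
Notation defvec L := {ffun 'I_(2 ^ L) -> bool}.

Definition meas M L (x : defvec L) (T : graph M L) (k : 'I_M) (r : 'I_(L + L))
  : bool := [exists l, [&& T (k, l), x l & signature l r]].

Definition meas_weight M L (x : defvec L) (T : graph M L) (k : 'I_M) : nat :=
  #|[set r | meas x T k r]|.

Definition decoded M L (x : defvec L) (T : graph M L) : {set 'I_(2 ^ L)} :=
  [set l | [exists k, (meas_weight x T k == L) &&
                      [forall r : 'I_L, bvec l r == meas x T k (lshift L r)]]].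

Definition defectives L (x : defvec L) : {set 'I_(2 ^ L)} := [set l | x l].

Definition singleton M L (x : defvec L) (T : graph M L) (k : 'I_M) : bool :=
  #|[set l | T (k, l) && x l]| == 1%N.

Definition some_defective_unresolved M L (x : defvec L) (T : graph M L) : bool :=
  [exists l, x l && [forall k, ~~ (T (k, l) && singleton x T k)]].

Definition graph_weight M L (p : R) (T : graph M L) : R :=
  \big[Rmult/R1]_(e : 'I_M * 'I_(2 ^ L)) (if T e then p else (Rminus R1 p)).

Definition prob M L (p : R) (E : pred (graph M L)) : R :=
  \big[Rplus/R0]_(T : graph M L | E T) graph_weight p T.

(* Cost model of the decoder (number of elementary bit reads): for each right
   node, read its 2L measured bits to compute the Hamming weight, and if the
   weight is L, read the first L bits to form the declared index. *)
Definition decode_cost M L (x : defvec L) (T : graph M L) : nat :=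
  \sum_(k < M) ((L + L) + (if meas_weight x T k == L then L else 0))%N.

From Stdlib Require Import Reals Lra Lia.
From HB Require Import structures.
From mathcomp Require Import all_boot zify.
Set Implicit Arguments.
Unset Strict Implicit.
Unset Printing Implicit Defensive.
Local Open Scope R_scope.

(** A right node that is a singleton for the defective item l measures
    exactly u_l, which has weight L and first half b_l, so l is declared.
    Conversely, at a node with some defective neighbour l the vector u_l
    already sets one bit of every complementary pair, so weight L forces the
    first half to be b_l: the decoder never declares a non-defective item.
    Hence decoding fails only if some defective item has no singleton
    neighbour.  The M rows of the graph are independent and a fixed row is a
    singleton for l with probability q = (1/K)(1-1/K)^(K-1) >= 1/(eK); the
    union bound gives failure probability at most
    K (1-q)^M <= K exp(-M/(eK)) <= K^(-alpha).  The decoder reads at most 3L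
    bits per right node, and M = O(K ln K). *)

HB.instance Definition _ := Monoid.isMulLaw.Build R R0 Rmult Rmult_0_l Rmult_0_r.
HB.instance Definition _ :=
  Monoid.isAddLaw.Build R Rmult Rplus Rmult_plus_distr_r Rmult_plus_distr_l.

Section BigR.
Variables (I : Type) (s : seq I) (P : pred I).

Lemma prodR_ge0 (F : I -> R) :
  (forall i, P i -> 0 <= F i) -> 0 <= \big[Rmult/R1]_(i <- s | P i) F i.
Proof. by move=> F_ge0; apply: big_ind => // [|a b]; [lra | nra]. Qed.

Lemma sumR_ge0 (F : I -> R) :
  (forall i, P i -> 0 <= F i) -> 0 <= \big[Rplus/R0]_(i <- s | P i) F i.
Proof. by move=> F_ge0; apply: big_ind => // [|a b]; lra. Qed.

Lemma ler_sumR (F G : I -> R) : (forall i, P i -> F i <= G i) ->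
  \big[Rplus/R0]_(i <- s | P i) F i <= \big[Rplus/R0]_(i <- s | P i) G i.
Proof. by move=> leFG; apply: (big_ind2 (fun a b => a <= b)) => // [|*]; lra. Qed.

End BigR.

Lemma prodR_if_forall (I : finType) (P : pred I) (F : I -> R) :
  (if [forall i, P i] then \big[Rmult/R1]_i F i else R0) =
  \big[Rmult/R1]_i (if P i then F i else R0).
Proof.
case: ifP => [/forallP allP | /negbT /forallPn [i0 Pi0]].
  by apply: eq_bigr => i _; rewrite allP.
by rewrite (bigD1 i0) //= (negbTE Pi0) Rmult_0_l.
Qed.

Lemma iter_Rmult n c : iter n (Rmult c) R1 = c ^ n.
Proof. by elim: n => //= n ->. Qed.

Lemma iter_Rplus n c : iter n (Rplus c) R0 = INR n * c.
Proof.
elim: n => [|n IH]; first by rewrite /=; ring.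
by rewrite S_INR iterS IH; ring.
Qed.

(** * Probabilities of events on random graphs *)

Definition bern (p : R) (b : bool) : R := if b then p else R1 - p.

Section GraphProbability.
Variables (M L : nat) (p : R).
Hypothesis p01 : 0 <= p <= 1.

Lemma graph_weight_ge0 (T : graph M L) : 0 <= graph_weight p T.
Proof. by apply: prodR_ge0 => e _; case: (T e); lra. Qed.

Lemma le_prob (E1 E2 : pred (graph M L)) :
  (forall T, E1 T -> E2 T) -> prob p E1 <= prob p E2.
Proof.
move=> E12; rewrite /prob (big_mkcond E1) (big_mkcond E2).
apply: ler_sumR => T _; case E1T: (E1 T); first by rewrite E12 //; lra.
by case: (E2 T); [apply: graph_weight_ge0 | lra].
Qed.

Lemma prob_exists_le (I : finType) (P : pred I) (E : I -> pred (graph M L)) :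
  prob p (fun T => [exists i, P i && E i T]) <= \big[Rplus/R0]_(i | P i) prob p (E i).
Proof.
rewrite /prob; under eq_bigr do rewrite big_mkcond.
rewrite exchange_big /= big_mkcond /=; apply: ler_sumR => T _.
have term_ge0 i : 0 <= (if E i T then graph_weight p T else R0).
  by case: (E i T); [apply: graph_weight_ge0 | lra].
case: ifP => [/existsP [i /andP [Pi EiT]] | _]; last exact: sumR_ge0.
rewrite (bigD1 i) //= EiT.
have : 0 <= \big[Rplus/R0]_(j | P j && (j != i)) (if E j T then graph_weight p T else R0).
  exact: sumR_ge0.
lra.
Qed.

End GraphProbability.

Section RowProbability.
Variables (n : nat) (p : R).

Definition row_weight (r : {ffun 'I_n -> bool}) : R := \big[Rmult/R1]_j bern p (r j).

Definition row_prob (B : pred {ffun 'I_n -> bool}) : R :=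
  \big[Rplus/R0]_(r | B r) row_weight r.

Lemma row_prob_predT : row_prob predT = 1.
Proof.
rewrite /row_prob /row_weight -(bigA_distr_bigA (fun j b => bern p b)).
by apply: big1 => j _; rewrite big_bool /bern /=; ring.
Qed.

Lemma row_prob_predC (B : pred {ffun 'I_n -> bool}) :
  row_prob (predC B) = 1 - row_prob B.
Proof.
have := row_prob_predT; rewrite /row_prob (bigID B) /=.
set S := \big[Rplus/R0]_(r | B r) _; set S' := \big[Rplus/R0]_(r | ~~ B r) _.
by lra.
Qed.

End RowProbability.

Definition graph_row M L (T : graph M L) (k : 'I_M) : {ffun 'I_(2 ^ L) -> bool} :=
  [ffun j => T (k, j)].

Definition graph_of_rows M L (G : {ffun 'I_M -> {ffun 'I_(2 ^ L) -> bool}}) : graph M L :=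
  [ffun e => G e.1 e.2].

Lemma graph_of_rows_bij M L : bijective (@graph_of_rows M L).
Proof.
exists (fun T => [ffun k => graph_row T k]).
- by move=> G; apply/ffunP => k; apply/ffunP => j; rewrite !ffunE.
- by move=> T; apply/ffunP => [[k j]]; rewrite !ffunE.
Qed.

Lemma graph_rowK M L G k : graph_row (@graph_of_rows M L G) k = G k.
Proof. by apply/ffunP => j; rewrite !ffunE. Qed.

Lemma graph_weight_of_rows M L p G :
  graph_weight p (@graph_of_rows M L G) = \big[Rmult/R1]_k row_weight p (G k).
Proof. by rewrite /graph_weight pair_bigA /=; apply: eq_bigr => [[k j]] _; rewrite ffunE. Qed.

(* Rows of the graph are independent, so avoiding B at every right node has
   probability the M-th power of avoiding it at one. *)
Lemma prob_rows_avoid M L p (B : pred {ffun 'I_(2 ^ L) -> bool}) :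
  prob p (fun T : graph M L => [forall k, ~~ B (graph_row T k)]) =
  (1 - row_prob p B) ^ M.
Proof.
rewrite -row_prob_predC /prob (reindex _ (onW_bij _ (graph_of_rows_bij M L))) /=.
rewrite big_mkcond /=.
under eq_bigr => G _.
  have -> : [forall k, ~~ B (graph_row (graph_of_rows G) k)] = [forall k, ~~ B (G k)].
    by apply: eq_forallb => k; rewrite graph_rowK.
  rewrite graph_weight_of_rows prodR_if_forall.
  over.
rewrite -(bigA_distr_bigA (fun _ r => if ~~ B r then row_weight p r else R0)) /=.
by rewrite big_const iter_Rmult card_ord /row_prob [X in _ = X ^ _]big_mkcond.
Qed.

Section UniqueDefectiveNeighbour.
Variables (L : nat) (x : defvec L) (l : 'I_(2 ^ L)).
Hypothesis xl : x l.

Definition hits_only_defective (r : {ffun 'I_(2 ^ L) -> bool}) : bool :=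
  r l && [forall j, x j && (j != l) ==> ~~ r j].

Lemma singleton_hits_only M (T : graph M L) k :
  (T (k, l) && singleton x T k) = hits_only_defective (graph_row T k).
Proof.
rewrite /hits_only_defective ffunE /singleton; case Tkl: (T (k, l)) => //=.
apply/cards1P/forallP => [[a Ha] j | only_l].
- have : l \in [set j | T (k, j) && x j] by rewrite inE Tkl xl.
  rewrite Ha inE => /eqP la; subst a.
  apply/implyP => /andP [xj jl]; rewrite ffunE; apply/negP => Tkj.
  have : j \in [set j | T (k, j) && x j] by rewrite inE Tkj xj.
  by rewrite Ha inE (negbTE jl).
- exists l; apply/setP => j; rewrite !inE.
  case: (eqVneq j l) => [->|jl]; first by rewrite Tkl xl.
  case xj: (x j); last by rewrite andbF.
  by have := only_l j; rewrite xj jl ffunE /= => /negbTE ->.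
Qed.

(* The indicator of the event times the row weight splits into one factor per
   item: l must be present, the other defectives absent, the rest is free. *)
Definition hits_only_factor p (j : 'I_(2 ^ L)) (b : bool) : R :=
  if j == l then (if b then p else R0)
  else if x j then (if b then R0 else R1 - p) else bern p b.

Lemma hits_only_weightE p r :
  (if hits_only_defective r then row_weight p r else R0) =
  \big[Rmult/R1]_j hits_only_factor p j (r j).
Proof.
rewrite /hits_only_defective /row_weight /hits_only_factor.
case rl: (r l) => /=; last by rewrite (bigD1 l) //= eqxx rl Rmult_0_l.
case: ifP => [/forallP only_l | /negbT /forallPn [j]].
- apply: eq_bigr => j _; case: (eqVneq j l) => [->|jl]; first by rewrite rl.
  case xj: (x j) => //.
  by have := only_l j; rewrite xj jl /= => /negbTE ->.
- rewrite negb_imply negbK => /andP [/andP [xj jl] rj].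
  by rewrite (bigD1 j) //= (negbTE jl) xj rj Rmult_0_l.
Qed.

Lemma row_prob_hits_only p :
  row_prob p hits_only_defective = p * (1 - p) ^ (#|defectives x| - 1).
Proof.
rewrite /row_prob big_mkcond /=.
under eq_bigr do rewrite hits_only_weightE.
rewrite -(bigA_distr_bigA (hits_only_factor p)) (bigD1 l) //= big_bool /=.
rewrite /hits_only_factor eqxx (bigID x) /=.
rewrite [X in _ * (_ * X)]big1; last first.
  by move=> j /andP [jl /negbTE xj]; rewrite big_bool /= (negbTE jl) xj /bern; ring.
rewrite (eq_bigr (fun _ => R1 - p)); last first.
  by move=> j /andP [jl xj]; rewrite big_bool /= (negbTE jl) xj; ring.
rewrite big_const iter_Rmult.
have -> : #|[pred j | (j != l) && x j]| = (#|defectives x| - 1)%N.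
  rewrite /defectives (cardsD1 l) inE xl /= add1n subSS subn0.
  by apply: eq_card => j; rewrite !inE.
by rewrite Rplus_0_r Rmult_1_r.
Qed.

End UniqueDefectiveNeighbour.

Lemma prob_unresolved_le M L p (x : defvec L) : 0 <= p <= 1 ->
  prob p (fun T : graph M L => some_defective_unresolved x T) <=
  INR #|defectives x| * (1 - p * (1 - p) ^ (#|defectives x| - 1)) ^ M.
Proof.
move=> p01.
pose avoids l (T : graph M L) := [forall k, ~~ hits_only_defective x l (graph_row T k)].
apply: (Rle_trans _ (prob p (fun T => [exists l, x l && avoids l T]))).
  apply: le_prob => // T /existsP [l /andP [xl unresolved]].
  apply/existsP; exists l; rewrite xl /=.
  apply/forallP => k; rewrite -singleton_hits_only //.
  exact: (forallP unresolved k).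
apply: (Rle_trans _ _ _ (prob_exists_le p01 x avoids)).
under eq_bigr => l xl do rewrite prob_rows_avoid row_prob_hits_only //.
rewrite big_const iter_Rplus /defectives cardsE; exact: Rle_refl.
Qed.

(** * Analytic estimates *)

Lemma exp_le x y : x <= y -> exp x <= exp y.
Proof. by case=> [/exp_increasing|->]; lra. Qed.

Lemma exp_pow x n : exp x ^ n = exp (INR n * x).
Proof.
elim: n => [|n IH]; first by rewrite /= Rmult_0_l exp_0.
by rewrite S_INR /= IH -exp_plus; congr exp; ring.
Qed.

Lemma one_sub_pow_le_exp q n : q <= 1 -> (1 - q) ^ n <= exp (- (INR n * q)).
Proof.
move=> q_le1; have := exp_ineq1_le (- q) => ineq.
apply: (Rle_trans _ (exp (- q) ^ n)); first by apply: pow_incr; lra.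
by rewrite exp_pow; apply: exp_le; lra.
Qed.

Lemma exp_m1_le_pow t : exp (-1) <= (1 - / (INR t + 1)) ^ t.
Proof.
case: t => [|t].
  have e1 := exp_ineq1_le 1.
  rewrite pow_O exp_Ropp; apply: (Rmult_le_reg_l (exp 1)); first lra.
  by rewrite Rinv_r; lra.
set u := INR t.+1.
have u_ge1 : 1 <= u by rewrite /u S_INR; have := pos_INR t; lra.
have exp_inv_le : exp (- / u) <= 1 - / (u + 1).
  have -> : 1 - / (u + 1) = / (1 + / u) by field; lra.
  rewrite exp_Ropp; apply: Rinv_le_contravar; last exact: exp_ineq1_le.
  by have := Rinv_0_lt_compat u; lra.
have -> : exp (-1) = exp (- / u) ^ t.+1 by rewrite exp_pow -/u; congr exp; field; lra.
by apply: pow_incr; split; [apply: Rlt_le; apply: exp_pos | exact: exp_inv_le].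
Qed.

Lemma singleton_prob_ge K : (0 < K)%N ->
  / (exp 1 * INR K) <= / INR K * (1 - / INR K) ^ (K - 1).
Proof.
move=> K_gt0; have k_ge1 : 1 <= INR K by apply: (le_INR 1); lia.
have := exp_m1_le_pow (K - 1); rewrite -S_INR subn1 prednK //= => pow_ge.
rewrite Rinv_mult -exp_Ropp Rmult_comm; apply: Rmult_le_compat_l => //.
by apply: Rlt_le; apply: Rinv_0_lt_compat; lra.
Qed.

Lemma unresolved_bound alpha K M : 0 < alpha -> (0 < K)%N ->
  exp 1 * (1 + alpha) * INR K * ln (INR K) <= INR M ->
  INR K * (1 - / INR K * (1 - / INR K) ^ (K - 1)) ^ M <= Rpower (INR K) (- alpha).
Proof.
move=> alpha_gt0 K_gt0 M_ge; have q_ge := singleton_prob_ge K_gt0.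
set k := INR K in M_ge q_ge *; set q := / k * _ in q_ge *.
have k_ge1 : 1 <= k by apply: (le_INR 1); lia.
have inv_k : 0 < / k <= 1.
  split; first by apply: Rinv_0_lt_compat; lra.
  by rewrite -Rinv_1; apply: Rinv_le_contravar; lra.
have q_le1 : q <= 1.
  have : (1 - / k) ^ (K - 1) <= 1.
    by rewrite -{2}(pow1 (K - 1)); apply: pow_incr; lra.
  have : 0 <= (1 - / k) ^ (K - 1) by apply: pow_le; lra.
  by rewrite /q; nra.
have ln_ge0 : 0 <= ln k.
  by case: k_ge1 => [/ln_increasing|<-]; rewrite ?ln_1; lra.
have e_gt0 := exp_pos 1.
have ek_gt0 : 0 < exp 1 * k by nra.
have Mq_ge : (1 + alpha) * ln k <= INR M * q.
  have -> : (1 + alpha) * ln k = / (exp 1 * k) * (exp 1 * (1 + alpha) * k * ln k).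
    by field; lra.
  have := pos_INR M; have := Rinv_0_lt_compat _ ek_gt0; nra.
apply: (Rle_trans _ (k * exp (- (INR M * q)))).
  by apply: Rmult_le_compat_l; [lra | exact: one_sub_pow_le_exp].
rewrite /Rpower -{1}(exp_ln k); last by lra.
by rewrite -exp_plus; apply: exp_le; lra.
Qed.

(** * Correctness of the decoder *)

Lemma bit_inj L (i j : nat) : (i < 2 ^ L)%N -> (j < 2 ^ L)%N ->
  (forall r, (r < L)%N -> bit i r = bit j r) -> i = j.
Proof.
elim: L i j => [|L IH] i j; first by rewrite expn0 => ? ? _; lia.
move=> i_lt j_lt same_bits.
have same_odd : odd i = odd j by have := same_bits 0%N isT; rewrite /bit expn0 !divn1.
have same_half : i %/ 2 = j %/ 2.
  apply: IH; rewrite ?ltn_divLR // -?expnSr // => r r_lt.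
  by have := same_bits r.+1 r_lt; rewrite /bit expnS !divnMA.
by rewrite (divn_eq i 2) (divn_eq j 2) !modn2 same_odd same_half.
Qed.

Lemma signature_lshift L (l : 'I_(2 ^ L)) (r : 'I_L) : signature l (lshift L r) = bit l r.
Proof. by rewrite /signature (unsplitK (inl r) : split (lshift L r) = inl r). Qed.

Lemma signature_rshift L (l : 'I_(2 ^ L)) (r : 'I_L) :
  signature l (rshift L r) = ~~ bit l r.
Proof. by rewrite /signature (unsplitK (inr r) : split (rshift L r) = inr r). Qed.

Lemma meas_weight_split M L (x : defvec L) (T : graph M L) k :
  meas_weight x T k =
  (\sum_(r < L) (meas x T k (lshift L r) + meas x T k (rshift L r)))%N.
Proof.
rewrite /meas_weight -sum1_card big_mkcond /= big_split_ord big_split /=.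
by congr addn; apply: eq_bigr => r _; rewrite !inE; case: (meas _ _ _ _).
Qed.

Lemma sum_ge1_eq1 n (f : 'I_n -> nat) :
  (forall i, 1 <= f i)%N -> (\sum_(i < n) f i = n)%N -> forall i, f i = 1%N.
Proof.
move=> f_ge1 sum_f i; apply/eqP; rewrite eqn_leq f_ge1 andbT leqNgt; apply/negP => f_gt1.
move: sum_f; rewrite (bigD1 i) //=; set S := (\sum_(j < n | _) _)%N => sum_f.
have : (\sum_(j < n | j != i) 1 <= S)%N by apply: leq_sum.
by rewrite sum1_card cardC1 card_ord; have := ltn_ord i; lia.
Qed.

Section Measurements.
Variables (M L : nat) (x : defvec L) (T : graph M L) (k : 'I_M).

Lemma meas_of_neighbour l r : T (k, l) -> x l -> signature l r -> meas x T k r.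
Proof. by move=> Tkl xl sig; apply/existsP; exists l; rewrite Tkl xl sig. Qed.

Lemma meas_singleton l : T (k, l) -> x l -> singleton x T k ->
  forall r, meas x T k r = signature l r.
Proof.
move=> Tkl xl /cards1P [a only_a] r.
have : l \in [set j | T (k, j) && x j] by rewrite inE Tkl xl.
rewrite only_a inE => /eqP la; subst a.
apply/idP/idP => [/existsP [j /and3P [Tkj xj sig]] | ]; last exact: meas_of_neighbour.
have : j \in [set j | T (k, j) && x j] by rewrite inE Tkj xj.
by rewrite only_a inE => /eqP <-.
Qed.

(* A defective neighbour l sets one bit of every pair (b_l, ~b_l), so weight
   L forces the first half of the measurement to be exactly b_l. *)
Lemma meas_lshift_of_weight l : T (k, l) -> x l -> meas_weight x T k = L ->
  forall r, meas x T k (lshift L r) = bit l r.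
Proof.
move=> Tkl xl weight_L.
have pair_ge1 r : (1 <= meas x T k (lshift L r) + meas x T k (rshift L r))%N.
  case b: (bit l r).
    by rewrite (@meas_of_neighbour l (lshift L r)) // signature_lshift b.
  by rewrite (@meas_of_neighbour l (rshift L r)) ?addn1 // signature_rshift b.
move=> r; have := sum_ge1_eq1 pair_ge1 _ r; rewrite -meas_weight_split => /(_ weight_L).
case b: (bit l r).
  by rewrite (@meas_of_neighbour l (lshift L r)) // signature_lshift b.
by rewrite (@meas_of_neighbour l (rshift L r)) ?signature_rshift ?b //; case: meas.
Qed.

End Measurements.

Section Decoder.
Variables (M L : nat) (x : defvec L) (T : graph M L).

Lemma decoded_sub_defectives : (exists l0, x l0) -> decoded x T \subset defectives x.
Proof.
move=> [l0 xl0]; apply/subsetP => l; rewrite !inE.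
case/existsP => k /andP [/eqP weight_L /forallP first_half].
case: (pickP (fun j => T (k, j) && x j)) => [j /andP [Tkj xj] | no_neighbour].
  suff -> : l = j by [].
  apply: val_inj; apply: (@bit_inj L); rewrite ?ltn_ord // => r r_lt.
  have := first_half (Ordinal r_lt); rewrite /bvec (meas_lshift_of_weight Tkj xj weight_L).
  by move/eqP.
(* Without a defective neighbour the weight is 0, so L = 0 and l0 is the
   only item. *)
have empty_meas : [set r | meas x T k r] = set0.
  apply/setP => r; rewrite !inE; apply/negbTE/existsP => [[j /and3P [Tkj xj _]]].
  by have := no_neighbour j; rewrite /= Tkj xj.
move: weight_L; rewrite /meas_weight empty_meas cards0 => L0.
suff -> : l = l0 by [].
have one_item : (2 ^ L = 1)%N by rewrite -L0.
have l_lt1 : (l < 1)%N := leq_trans (ltn_ord l) (eq_leq one_item).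
have l0_lt1 : (l0 < 1)%N := leq_trans (ltn_ord l0) (eq_leq one_item).
by apply: val_inj => /=; lia.
Qed.

Lemma defectives_sub_decoded :
  ~~ some_defective_unresolved x T -> defectives x \subset decoded x T.
Proof.
move=> /existsPn resolved; apply/subsetP => l; rewrite !inE => xl.
have := resolved l; rewrite xl /= => /forallPn [k]; rewrite negbK => /andP [Tkl single].
have meas_sig := meas_singleton Tkl xl single.
apply/existsP; exists k; apply/andP; split.
  rewrite meas_weight_split (eq_bigr (fun _ => 1%N)) ?sum1_card ?card_ord //.
  by move=> r _; rewrite !meas_sig signature_lshift signature_rshift; case: bit.
by apply/forallP => r; rewrite meas_sig signature_lshift.
Qed.

Lemma decoded_eq_defectives : (exists l0, x l0) ->
  ~~ some_defective_unresolved x T -> decoded x T = defectives x.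
Proof.
move=> has_defective resolved; apply/eqP; rewrite eqEsubset.
by rewrite decoded_sub_defectives // defectives_sub_decoded.
Qed.

End Decoder.

(** * Cost of decoding *)

Lemma decode_cost_le M L (x : defvec L) (T : graph M L) :
  (decode_cost x T <= 3 * L * M)%N.
Proof.
apply: (@leq_trans (\sum_(k < M) (3 * L))%N).
  by apply: leq_sum => k _; case: ifP; lia.
by rewrite sum_nat_const card_ord mulnC.
Qed.

Lemma ln2_gt0 : 0 < ln 2.
Proof. by rewrite -ln_1; apply: ln_increasing; lra. Qed.

Lemma two_ln2_le k : 2 <= k -> 2 * ln 2 <= k * ln k.
Proof.
move=> k_ge2; have ln2_pos := ln2_gt0.
have : ln 2 <= ln k by case: k_ge2 => [/ln_increasing|<-]; lra.
nra.
Qed.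

Lemma INR_decode_cost_le c K M L (x : defvec L) (T : graph M L) :
  0 <= c -> (2 <= K)%N -> INR M < c * INR K * ln (INR K) + 1 ->
  INR (decode_cost x T) <= 3 * (c + / (2 * ln 2)) * INR K * ln (INR K) * INR L.
Proof.
move=> c_ge0 K_ge2 M_lt; set A := INR K * ln (INR K).
have ln2_pos := ln2_gt0.
have one_le : 1 <= / (2 * ln 2) * A.
  have -> : 1 = / (2 * ln 2) * (2 * ln 2) by field; lra.
  apply: Rmult_le_compat_l; first by apply: Rlt_le; apply: Rinv_0_lt_compat; lra.
  by apply: two_ln2_le; apply: (le_INR 2); lia.
have cost := le_INR _ _ (elimT leP (decode_cost_le x T)); rewrite !mult_INR in cost.
have -> : 3 * (c + / (2 * ln 2)) * INR K * ln (INR K) * INR L =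
          INR 3 * INR L * ((c + / (2 * ln 2)) * A) by rewrite /A /=; ring.
apply: (Rle_trans _ _ _ cost); apply: Rmult_le_compat_l.
  by have := pos_INR L; rewrite /=; lra.
by rewrite /A in one_le *; lra.
Qed.

Theorem theorem3 (alpha : R) (halpha : (0 < alpha)) :
  exists C : R,
  forall (K L M : nat) (x : defvec L),
    (0 < K)%nat ->
    #|defectives x| = K ->
    (* M = e (1 + alpha) K ln K, rounded up to an integer *)
    (exp 1 * (1 + alpha) * INR K * ln (INR K) <= INR M) ->
    (INR M < exp 1 * (1 + alpha) * INR K * ln (INR K) + 1) ->
    [/\ (prob (/ INR K) (fun T : graph M L => decoded x T != defectives x)
           <= Rpower (INR K) (- alpha)),
        (prob (/ INR K) (fun T : graph M L => some_defective_unresolved x T)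
           <= Rpower (INR K) (- alpha))
      & (2 <= K)%nat -> forall T : graph M L,
          (INR (decode_cost x T) <= C * INR K * ln (INR K) * INR L)].
Proof.
exists (3 * (exp 1 * (1 + alpha) + / (2 * ln 2))).
move=> K L M x K_gt0 card_x M_ge M_lt.
have K_ge1 : 1 <= INR K by apply: (le_INR 1); lia.
have p01 : 0 <= / INR K <= 1.
  split; first by apply: Rlt_le; apply: Rinv_0_lt_compat; lra.
  by rewrite -Rinv_1; apply: Rinv_le_contravar; lra.
have unresolved_le :
    prob (/ INR K) (fun T : graph M L => some_defective_unresolved x T)
      <= Rpower (INR K) (- alpha).
  apply: (Rle_trans _ _ _ (prob_unresolved_le M x p01)).
  by rewrite card_x; exact: unresolved_bound.
have has_defective : exists l0, x l0.
  have /card_gt0P [l0] : (0 < #|defectives x|)%N by rewrite card_x.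
  by rewrite inE => xl0; exists l0.
split => //.
- apply: Rle_trans unresolved_le; apply: le_prob => // T.
  by apply: contraNT => /(decoded_eq_defectives has_defective) ->.
- by move=> K_ge2 T; apply: INR_decode_cost_le => //; have := exp_pos 1; nra.
Qed.
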